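(* $\beta^c_1<\sqrt{3/2}<\beta^c_0$.
   Context: $\mathbb{N}=\{0,1,2,\dots\}$. For $t\ge 0$ let $q(t)=\lfloor t+1\rfloor/2$ if $\lfloor t\rfloor$ is odd and $q(t)=t-\lfloor t\rfloor/2$ if $\lfloor t\rfloor$ is even, and $p(t)=t+1-q(t)$. For $\beta\ge1$ let $\hat\sigma(t,\beta)\in(0,1)$ be the unique solution $\sigma$ of $\frac{p(t)\sigma}{\sqrt{1-\sigma^2}}+\frac{q(t)\sigma}{\sqrt{\beta^2-\sigma^2}}=1$, and $l(t,\beta)=\frac{p(t)}{\sqrt{1-\hat\sigma^2}}+\frac{\beta^2q(t)}{\sqrt{\beta^2-\hat\sigma^2}}-t-\sqrt2$. For $k\in\mathbb{N}$, $\delta(k,\beta)=l(2k+2,\beta)-l(2k,\beta)$, and $\beta^c_k$ is the unique number in $(1,\sqrt2)$ with $\delta(k,\beta^c_k)=0$ (well defined since $\beta\mapsto\delta(k,\beta)$ is strictly increasing on $[1,\infty)$ with $\delta(k,1)<0<\delta(k,\sqrt2)$). *)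

From Stdlib Require Import Reals Lra ZArith ClassicalEpsilon.
Open Scope R_scope.

(* floor t, for real t: Int_part t = up t - 1 is the integer part (floor) *)
Definition floorR (t : R) : Z := Int_part t.

Definition q (t : R) : R :=
  if Z.odd (floorR t) then IZR (floorR (t + 1)) / 2
  else t - IZR (floorR t) / 2.

Definition p (t : R) : R := t + 1 - q t.

Definition is_sigma_hat (t beta s : R) : Prop :=
  0 < s < 1 /\
  p t * s / sqrt (1 - s ^ 2) + q t * s / sqrt (beta ^ 2 - s ^ 2) = 1.

(* the unique solution (chosen via Hilbert's epsilon; unique by the paper) *)
Definition sigma_hat (t beta : R) : R :=
  epsilon (inhabits 0) (is_sigma_hat t beta).

Definition l (t beta : R) : R :=
  let s := sigma_hat t beta in
  p t / sqrt (1 - s ^ 2) + beta ^ 2 * q t / sqrt (beta ^ 2 - s ^ 2) - t - sqrt 2.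

Definition delta (k : nat) (beta : R) : R :=
  l (2 * INR k + 2) beta - l (2 * INR k) beta.

Definition is_beta_c (k : nat) (b : R) : Prop :=
  1 < b < sqrt 2 /\ delta k b = 0.

Definition beta_c (k : nat) : R := epsilon (inhabits 0) (is_beta_c k).

(* With [a = p t] and [b = q t], [sigma_hat t be] is the critical point of the concave
   function [G s = s + a sqrt (1 - s^2) + b sqrt (be^2 - s^2)] on [[0, 1]], and the
   critical-point equation turns [l t be + t + sqrt 2] into [G (sigma_hat t be) = max G].
   For even [t] this gives [delta k be = max G(2k+2) - max G(2k) - 2], with
   [max G(0) = sqrt 2].  A maximum of functions nondecreasing in [be] is nondecreasing,
   and it is Lipschitz in [be], so each sign pattern of [delta k] yields a root by the
   intermediate value theorem and locates it by monotonicity.  The signs are certified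
   with rational bounds on [max G]: from below by evaluating [G] at a rational point,
   from above by the tangent bound [sqrt x <= (x / c + c) / 2], which makes [G] a
   concave quadratic in [s]. *)

From Stdlib Require Import Reals Lra ZArith ClassicalEpsilon Ranalysis5.
From Coquelicot Require Import Coquelicot.
Open Scope R_scope.

Lemma sqrt_le_of_le_sqr x r : 0 <= r -> x <= r * r -> sqrt x <= r.
Proof. intros Hr Hx. rewrite <- (sqrt_square r Hr). now apply sqrt_le_1_alt. Qed.

Lemma le_sqrt_of_sqr_le x r : 0 <= r -> r * r <= x -> r <= sqrt x.
Proof. intros Hr Hx. rewrite <- (sqrt_square r Hr). now apply sqrt_le_1_alt. Qed.

Lemma sqrt_le_tangent x c : 0 <= x -> 0 < c -> sqrt x <= (x / c + c) / 2.
Proof.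
  intros Hx Hc. pose proof (sqrt_sqrt x Hx). pose proof (sqrt_pos x).
  apply Rmult_le_reg_r with (2 * c); [lra|].
  replace ((x / c + c) / 2 * (2 * c)) with (x + c * c) by (field; lra).
  pose proof (pow2_ge_0 (sqrt x - c)). nra.
Qed.

Lemma sqrt_sub_le u v : 1 / 4 <= v <= u -> sqrt u - sqrt v <= u - v.
Proof.
  intros Huv. pose proof (sqrt_sqrt u ltac:(lra)). pose proof (sqrt_sqrt v ltac:(lra)).
  assert (1 / 2 <= sqrt v) by (apply le_sqrt_of_sqr_le; lra).
  assert (sqrt v <= sqrt u) by (apply sqrt_le_1_alt; lra).
  nra.
Qed.

Lemma sqrt_mul_sqrt_le c u v : u ^ 2 <= c -> v ^ 2 <= c ->
  sqrt (c - u ^ 2) * sqrt (c - v ^ 2) <= c - u * v.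
Proof.
  intros Hu Hv.
  pose proof (sqrt_pos (c - u ^ 2)). pose proof (sqrt_pos (c - v ^ 2)).
  pose proof (sqrt_sqrt (c - u ^ 2) ltac:(lra)) as Eu.
  pose proof (sqrt_sqrt (c - v ^ 2) ltac:(lra)) as Ev.
  assert (Hc : 0 <= c - u * v) by (pose proof (pow2_ge_0 (u - v)); nra).
  apply Rsqr_incr_0_var; [|exact Hc]. unfold Rsqr.
  replace (sqrt (c - u ^ 2) * sqrt (c - v ^ 2) * (sqrt (c - u ^ 2) * sqrt (c - v ^ 2)))
    with ((sqrt (c - u ^ 2) * sqrt (c - u ^ 2)) * (sqrt (c - v ^ 2) * sqrt (c - v ^ 2)))
    by ring.
  rewrite Eu, Ev. pose proof (pow2_ge_0 (u - v)). nra.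
Qed.

Definition G (a b be s : R) : R :=
  s + a * sqrt (1 - s ^ 2) + b * sqrt (be ^ 2 - s ^ 2).

(* [G' s = 0]; for [a = p t] and [b = q t] this is [is_sigma_hat t be s]. *)
Definition is_crit (a b be s : R) : Prop :=
  0 < s < 1 /\ a * s / sqrt (1 - s ^ 2) + b * s / sqrt (be ^ 2 - s ^ 2) = 1.

Lemma is_crit_exists a b be : 1 <= a -> 0 <= b -> 1 <= be -> exists s, is_crit a b be s.
Proof.
  intros Ha Hb Hbe.
  set (F s := a * s / sqrt (1 - s ^ 2) + b * s / sqrt (be ^ 2 - s ^ 2) - 1).
  assert (F0 : F 0 = -1) by (unfold F; rewrite !Rmult_0_r, !Rdiv_0_l; ring).
  assert (F45 : 0 < F (4 / 5)).
  { unfold F. replace (1 - (4 / 5) ^ 2) with ((3 / 5) * (3 / 5)) by field.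
    rewrite sqrt_square by lra.
    assert (0 < sqrt (be ^ 2 - (4 / 5) ^ 2)) by (apply sqrt_lt_R0; nra).
    assert (0 <= b * (4 / 5) / sqrt (be ^ 2 - (4 / 5) ^ 2))
      by (apply Rdiv_le_0_compat; lra).
    assert (a * (4 / 5) / (3 / 5) = 4 / 3 * a) by field. lra. }
  destruct (IVT_interv F 0 (4 / 5)) as [s [Hs Fs]]; try lra.
  - intros x Hx. apply continuity_pt_filterlim.
    assert (HF : ex_derive F x); [|now apply ex_derive_continuous in HF].
    unfold F. auto_derive. repeat split; try (apply Rgt_not_eq, sqrt_lt_R0); nra.
  - exists s. split.
    + split; [|lra]. destruct (Req_dec s 0) as [->|]; lra.
    + unfold F in Fs. lra.
Qed.

Lemma div_sqrt_split a u s : s ^ 2 < u ->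
  a * u / sqrt (u - s ^ 2) = a * sqrt (u - s ^ 2) + s * (a * s / sqrt (u - s ^ 2)).
Proof.
  intros Hs. pose proof (sqrt_lt_R0 (u - s ^ 2) ltac:(lra)).
  pose proof (sqrt_sqrt (u - s ^ 2) ltac:(lra)) as E.
  set (A := sqrt (u - s ^ 2)) in *.
  replace (a * u) with (a * (A * A + s ^ 2)) by (rewrite E; ring).
  field. lra.
Qed.

Lemma mul_sqrt_le_div a u s s0 : 0 <= a -> s ^ 2 < u -> s0 ^ 2 <= u ->
  a * sqrt (u - s0 ^ 2) <= a * (u - s0 * s) / sqrt (u - s ^ 2).
Proof.
  intros Ha Hs Hs0. pose proof (sqrt_lt_R0 (u - s ^ 2) ltac:(lra)).
  pose proof (sqrt_mul_sqrt_le u s0 s Hs0 ltac:(lra)).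
  apply Rmult_le_reg_r with (sqrt (u - s ^ 2)); [lra|].
  replace (a * (u - s0 * s) / sqrt (u - s ^ 2) * sqrt (u - s ^ 2))
    with (a * (u - s0 * s)) by (field; lra).
  nra.
Qed.

Section Critical_point.

Variables a b be s : R.
Hypothesis Ha : 0 <= a.
Hypothesis Hb : 0 <= b.
Hypothesis Hbe : 1 <= be.
Hypothesis Hcrit : is_crit a b be s.

Lemma is_crit_value :
  a / sqrt (1 - s ^ 2) + be ^ 2 * b / sqrt (be ^ 2 - s ^ 2) = G a b be s.
Proof.
  destruct Hcrit as [Hs E]. unfold G.
  rewrite <- (Rmult_1_r a) at 1. rewrite (Rmult_comm (be ^ 2) b).
  rewrite (div_sqrt_split a 1 s), (div_sqrt_split b (be ^ 2) s) by nra.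
  transitivity (a * sqrt (1 - s ^ 2) + b * sqrt (be ^ 2 - s ^ 2)
    + s * (a * s / sqrt (1 - s ^ 2) + b * s / sqrt (be ^ 2 - s ^ 2))); [ring|].
  rewrite E. ring.
Qed.

(* [G] is concave, so its critical point is its maximum on [[-1, 1]]. *)
Lemma is_crit_max s0 : s0 ^ 2 <= 1 -> G a b be s0 <= G a b be s.
Proof.
  intros Hs0. rewrite <- is_crit_value. destruct Hcrit as [Hs E]. unfold G.
  pose proof (mul_sqrt_le_div a 1 s s0 Ha ltac:(nra) Hs0).
  pose proof (mul_sqrt_le_div b (be ^ 2) s s0 Hb ltac:(nra) ltac:(nra)).
  assert (s0 * (a * s / sqrt (1 - s ^ 2)) + s0 * (b * s / sqrt (be ^ 2 - s ^ 2)) = s0)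
    by (rewrite <- Rmult_plus_distr_l, E; ring).
  unfold Rdiv in *. lra.
Qed.

Lemma is_crit_sqr_le : s ^ 2 * (1 + a ^ 2) <= 1.
Proof.
  destruct Hcrit as [Hs E].
  set (A := sqrt (1 - s ^ 2)). set (B := sqrt (be ^ 2 - s ^ 2)) in *.
  assert (HA : 0 < A) by (apply sqrt_lt_R0; nra).
  assert (HB : 0 < B) by (apply sqrt_lt_R0; nra).
  pose proof (sqrt_sqrt (1 - s ^ 2) ltac:(nra)) as EA. fold A in EA.
  assert (0 <= b * s / B) by (apply Rdiv_le_0_compat; nra).
  assert (a * s <= A).
  { apply Rmult_le_reg_r with (/ A); [now apply Rinv_0_lt_compat|].
    rewrite Rinv_r by lra. fold A in E. unfold Rdiv in *. lra. }
  assert (0 <= a * s) by nra. nra.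
Qed.

End Critical_point.

Lemma floorR_IZR n : floorR (IZR n) = n.
Proof.
  unfold floorR, Int_part. rewrite <- (tech_up (IZR n) (n + 1)); [ring|rewrite plus_IZR; lra..].
Qed.

Lemma pq_even n : p (2 * INR n) = INR n + 1 /\ q (2 * INR n) = INR n.
Proof.
  assert (Ht : 2 * INR n = IZR (2 * Z.of_nat n)) by now rewrite mult_IZR, <- INR_IZR_INZ.
  assert (Hq : q (2 * INR n) = INR n).
  { unfold q. rewrite Ht, floorR_IZR, Z.odd_even, <- Ht. field. }
  split; [unfold p; rewrite Hq|]; lra.
Qed.

Lemma sigma_hat_crit n be : 1 <= be ->
  is_crit (INR n + 1) (INR n) be (sigma_hat (2 * INR n) be).
Proof.
  intros Hbe. pose proof (pos_INR n). destruct (pq_even n) as [Hp Hq].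
  assert (Hs : is_sigma_hat (2 * INR n) be (sigma_hat (2 * INR n) be)).
  { unfold sigma_hat. apply epsilon_spec. unfold is_sigma_hat. rewrite Hp, Hq.
    apply is_crit_exists; lra. }
  unfold is_sigma_hat in Hs. rewrite Hp, Hq in Hs. exact Hs.
Qed.

(* [max G] for [t = 2 n], where [p t = n + 1] and [q t = n]. *)
Definition Gmax (n : nat) (be : R) : R :=
  G (INR n + 1) (INR n) be (sigma_hat (2 * INR n) be).

Lemma l_even n be : 1 <= be -> l (2 * INR n) be = Gmax n be - 2 * INR n - sqrt 2.
Proof.
  intros Hbe. pose proof (pos_INR n). destruct (pq_even n) as [Hp Hq].
  unfold l, Gmax. rewrite Hp, Hq, is_crit_value; [ring|lra|exact (sigma_hat_crit n be Hbe)].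
Qed.

Lemma delta_Gmax k be : 1 <= be -> delta k be = Gmax (S k) be - Gmax k be - 2.
Proof.
  intros Hbe. unfold delta.
  replace (2 * INR k + 2) with (2 * INR (S k)) by (rewrite S_INR; ring).
  rewrite !l_even, S_INR by exact Hbe. ring.
Qed.

Lemma Gmax_0 be : 1 <= be -> Gmax 0 be = sqrt 2.
Proof.
  intros Hbe. pose proof (sigma_hat_crit 0 be Hbe) as [Hs E]. unfold Gmax in *.
  simpl INR in *. set (s := sigma_hat (2 * 0) be) in *.
  set (A := sqrt (1 - s ^ 2)) in *.
  assert (HA : 0 < A) by (apply sqrt_lt_R0; nra).
  pose proof (sqrt_sqrt (1 - s ^ 2) ltac:(nra)) as EA. fold A in EA.
  rewrite Rmult_0_l, Rdiv_0_l, Rplus_0_r, Rplus_0_l, Rmult_1_l in E.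
  assert (Hs_A : s = A) by (rewrite <- (Rmult_1_l A), <- E; field; lra).
  unfold G. fold A. rewrite <- Hs_A in *.
  replace (s + (0 + 1) * s + 0 * sqrt (be ^ 2 - s ^ 2)) with (2 * s) by ring.
  rewrite <- (sqrt_square (2 * s)) by lra. f_equal. nra.
Qed.

Lemma Gmax_mono n x y : 1 <= x <= y -> Gmax n x <= Gmax n y.
Proof.
  intros Hxy. pose proof (pos_INR n).
  pose proof (sigma_hat_crit n x ltac:(lra)) as Hx.
  pose proof (sigma_hat_crit n y ltac:(lra)) as Hy.
  unfold Gmax. set (sx := sigma_hat (2 * INR n) x) in *.
  apply Rle_trans with (G (INR n + 1) (INR n) y sx).
  - destruct Hx as [Hs _]. unfold G.
    assert (sqrt (x ^ 2 - sx ^ 2) <= sqrt (y ^ 2 - sx ^ 2)) by (apply sqrt_le_1_alt; nra).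
    nra.
  - destruct Hx as [Hs _].
    apply (is_crit_max (INR n + 1) (INR n) y); [lra|exact H|lra|exact Hy|nra].
Qed.

Lemma Gmax_increment_le n x y : 1 <= x <= y -> Gmax n y - Gmax n x <= INR n * (y ^ 2 - x ^ 2).
Proof.
  intros Hxy. pose proof (pos_INR n).
  pose proof (sigma_hat_crit n x ltac:(lra)) as Hx.
  pose proof (sigma_hat_crit n y ltac:(lra)) as Hy.
  unfold Gmax. set (sx := sigma_hat (2 * INR n) x) in *.
  set (sy := sigma_hat (2 * INR n) y) in *.
  assert (Hsy : sy ^ 2 <= 1 / 2).
  { pose proof (is_crit_sqr_le (INR n + 1) (INR n) y sy ltac:(lra) H ltac:(lra) Hy).
    pose proof (pow2_ge_0 sy). nra. }
  assert (G (INR n + 1) (INR n) x sy <= G (INR n + 1) (INR n) x sx)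
    by (apply (is_crit_max (INR n + 1) (INR n) x); [lra|exact H|lra|exact Hx|nra]).
  unfold G in *. set (u := y ^ 2 - sy ^ 2) in *. set (v := x ^ 2 - sy ^ 2) in *.
  assert (sqrt u - sqrt v <= u - v) by (apply sqrt_sub_le; unfold u, v; nra).
  replace (y ^ 2 - x ^ 2) with (u - v) by (unfold u, v; ring).
  nra.
Qed.

Lemma continuity_of_lipschitz f C :
  (forall x y, Rabs (f x - f y) <= C * Rabs (x - y)) -> continuity f.
Proof.
  intros Hf x eps Heps. exists (eps / (Rabs C + 1)).
  pose proof (Rabs_pos C). split; [apply Rdiv_lt_0_compat; lra|].
  intros y [_ Hy]. simpl in *. unfold R_dist in *.
  apply Rle_lt_trans with ((Rabs C + 1) * Rabs (y - x)).
  - pose proof (Rle_abs C). pose proof (Rabs_pos (y - x)). specialize (Hf y x). nra.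
  - apply Rmult_lt_compat_l with (r := Rabs C + 1) in Hy; [|lra].
    replace ((Rabs C + 1) * (eps / (Rabs C + 1))) with eps in Hy by (field; lra). exact Hy.
Qed.

(* [Gmax n] is only controlled for [be >= 1]; clamping gives a globally continuous
   function to which the intermediate value theorem applies. *)
Definition clamp (x : R) : R := Rmax 1 (Rmin 2 x).

Lemma clamp_range x : 1 <= clamp x <= 2.
Proof. unfold clamp, Rmax, Rmin. repeat destruct Rle_dec; lra. Qed.

Lemma clamp_id x : 1 <= x <= 2 -> clamp x = x.
Proof. unfold clamp, Rmax, Rmin. intros. repeat destruct Rle_dec; lra. Qed.

Lemma clamp_lipschitz x y : Rabs (clamp x - clamp y) <= Rabs (x - y).
Proof. unfold clamp, Rmax, Rmin, Rabs. repeat destruct Rle_dec; repeat destruct Rcase_abs; lra. Qed.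

Lemma Gmax_clamp_lipschitz n x y :
  Rabs (Gmax n (clamp x) - Gmax n (clamp y)) <= 4 * INR n * Rabs (x - y).
Proof.
  pose proof (pos_INR n). pose proof (clamp_lipschitz x y).
  pose proof (clamp_range x). pose proof (clamp_range y).
  assert (Hlip : forall u v, 1 <= u <= v -> v <= 2 ->
    Rabs (Gmax n v - Gmax n u) <= 4 * INR n * (v - u)).
  { intros u v Huv Hv. pose proof (Gmax_mono n u v Huv).
    pose proof (Gmax_increment_le n u v Huv).
    rewrite Rabs_right by lra. nra. }
  destruct (Rle_dec (clamp x) (clamp y)).
  - rewrite Rabs_minus_sym. eapply Rle_trans; [apply Hlip; lra|].
    rewrite Rabs_minus_sym in H0. revert H0. unfold Rabs. destruct Rcase_abs; nra.
  - eapply Rle_trans; [apply Hlip; lra|]. revert H0. unfold Rabs. destruct Rcase_abs; nra.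
Qed.

Lemma beta_c_spec k lo hi : 1 <= lo < hi -> hi <= sqrt 2 ->
  delta k lo < 0 -> 0 < delta k hi -> is_beta_c k (beta_c k).
Proof.
  intros Hlo Hhi Dlo Dhi. assert (sqrt 2 <= 2) by (apply sqrt_le_of_le_sqr; lra).
  set (g y := Gmax (S k) (clamp y) - Gmax k (clamp y) - 2).
  assert (Hg : forall y, 1 <= y <= 2 -> g y = delta k y)
    by (intros y Hy; unfold g; rewrite clamp_id, delta_Gmax by lra; reflexivity).
  assert (Cg : continuity g).
  { apply continuity_of_lipschitz with (4 * INR (S k) + 4 * INR k). intros x y. unfold g.
    pose proof (Gmax_clamp_lipschitz (S k) x y). pose proof (Gmax_clamp_lipschitz k x y).
    pose proof (Rabs_triang (Gmax (S k) (clamp x) - Gmax (S k) (clamp y))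
                            (- (Gmax k (clamp x) - Gmax k (clamp y)))).
    rewrite Rabs_Ropp in *.
    replace (Gmax (S k) (clamp x) - Gmax k (clamp x) - 2
             - (Gmax (S k) (clamp y) - Gmax k (clamp y) - 2))
      with (Gmax (S k) (clamp x) - Gmax (S k) (clamp y)
            + - (Gmax k (clamp x) - Gmax k (clamp y))) by ring.
    lra. }
  destruct (IVT g lo hi Cg) as [b [Hb Gb]]; [lra|rewrite Hg; lra..|].
  unfold beta_c. apply epsilon_spec. exists b.
  rewrite Hg in Gb by lra. split; [|exact Gb].
  split; [destruct (Req_dec b lo)|destruct (Req_dec b hi)]; subst; lra.
Qed.

Lemma Gmax_ge n be s0 r1 r2 K : 1 <= be -> s0 ^ 2 <= 1 -> 0 <= r1 -> 0 <= r2 ->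
  r1 * r1 <= 1 - s0 ^ 2 -> r2 * r2 <= be ^ 2 - s0 ^ 2 ->
  K <= s0 + (INR n + 1) * r1 + INR n * r2 -> K <= Gmax n be.
Proof.
  intros Hbe Hs0 Hr1 Hr2 R1 R2 HK. pose proof (pos_INR n).
  apply Rle_trans with (G (INR n + 1) (INR n) be s0).
  - unfold G. pose proof (le_sqrt_of_sqr_le _ _ Hr1 R1).
    pose proof (le_sqrt_of_sqr_le _ _ Hr2 R2). nra.
  - apply (is_crit_max (INR n + 1) (INR n) be);
      [lra|exact H|exact Hbe|exact (sigma_hat_crit n be Hbe)|exact Hs0].
Qed.

Lemma Gmax_le n be c1 c2 K : 1 <= be -> 0 < c1 -> 0 < c2 ->
  (forall s, 0 <= s <= 1 ->
     s + (INR n + 1) * ((1 - s ^ 2) / c1 + c1) / 2 + INR n * ((be ^ 2 - s ^ 2) / c2 + c2) / 2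
     <= K) ->
  Gmax n be <= K.
Proof.
  intros Hbe Hc1 Hc2 HK. pose proof (pos_INR n).
  destruct (sigma_hat_crit n be Hbe) as [Hs _]. unfold Gmax, G.
  set (s := sigma_hat (2 * INR n) be) in *.
  pose proof (sqrt_le_tangent (1 - s ^ 2) c1 ltac:(nra) Hc1).
  pose proof (sqrt_le_tangent (be ^ 2 - s ^ 2) c2 ltac:(nra) Hc2).
  specialize (HK s ltac:(lra)). nra.
Qed.

Lemma Gmax_1_sqrt_3_2_le : Gmax 1 (sqrt (3 / 2)) <= 1698739 / 500000.
Proof.
  apply (Gmax_le 1 (sqrt (3 / 2)) (94173 / 100000) (23553 / 20000)); try lra.
  - apply le_sqrt_of_sqr_le; lra.
  - intros s Hs. rewrite pow2_sqrt by lra. simpl INR.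
    pose proof (pow2_ge_0 (s - 739352223 / 2198020000)). lra.
Qed.

Lemma Gmax_1_sqrt_2_le : Gmax 1 (sqrt 2) <= 7187439 / 2000000.
Proof.
  apply (Gmax_le 1 (sqrt 2) (46853 / 50000) (137043 / 100000)); try lra.
  - apply le_sqrt_of_sqr_le; lra.
  - intros s Hs. rewrite pow2_sqrt by lra. simpl INR.
    pose proof (pow2_ge_0 (s - 6420875679 / 18389600000)). lra.
Qed.

Lemma Gmax_1_13_le : Gmax 1 (13 / 10) <= 34756073 / 10000000.
Proof.
  apply (Gmax_le 1 (13 / 10) (11747 / 12500) (62713 / 50000)); try lra.
  intros s Hs. simpl INR. pose proof (pow2_ge_0 (s - 43334683 / 126775000)). lra.
Qed.

Lemma Gmax_1_14_le : Gmax 1 (14 / 10) <= 35790483 / 10000000.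
Proof.
  apply (Gmax_le 1 (14 / 10) (46869 / 50000) (67799 / 50000)); try lra.
  intros s Hs. simpl INR. pose proof (pow2_ge_0 (s - 3177671331 / 9123350000)). lra.
Qed.

Lemma Gmax_2_1_le : Gmax 2 1 <= 12747549 / 2500000.
Proof.
  apply (Gmax_le 2 1 (49029 / 50000) (49029 / 50000)); try lra.
  intros s Hs. simpl INR. pose proof (pow2_ge_0 (s - 49029 / 250000)). lra.
Qed.

Lemma Gmax_1_1_ge : 790569 / 250000 <= Gmax 1 1.
Proof.
  apply (Gmax_ge 1 1 (31623 / 100000) (474341 / 500000) (474341 / 500000));
    simpl INR; lra.
Qed.

Lemma Gmax_1_sqrt_2_ge : 3593719 / 1000000 <= Gmax 1 (sqrt 2).
Proof.
  apply (Gmax_ge 1 (sqrt 2) (8729 / 25000) (937063 / 1000000) (1370433 / 1000000));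
    rewrite ?pow2_sqrt by lra; simpl INR; try lra.
  apply le_sqrt_of_sqr_le; lra.
Qed.

Lemma Gmax_2_sqrt_3_2_ge : 5556321 / 1000000 <= Gmax 2 (sqrt (3 / 2)).
Proof.
  apply (Gmax_ge 2 (sqrt (3 / 2)) (21153 / 100000) (977371 / 1000000) (1206339 / 1000000));
    rewrite ?pow2_sqrt by lra; simpl INR; try lra.
  apply le_sqrt_of_sqr_le; lra.
Qed.

Lemma Gmax_2_13_ge : 2854519 / 500000 <= Gmax 2 (13 / 10).
Proof.
  apply (Gmax_ge 2 (13 / 10) (10793 / 50000) (122053 / 125000) (1281953 / 1000000));
    simpl INR; lra.
Qed.

Lemma Gmax_2_14_ge : 5911713 / 1000000 <= Gmax 2 (14 / 10).
Proof.
  apply (Gmax_ge 2 (14 / 10) (2211 / 10000) (975251 / 1000000) (138243 / 100000));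
    simpl INR; lra.
Qed.

Lemma sqrt_2_bounds : 141421356 / 100000000 <= sqrt 2 <= 141421357 / 100000000.
Proof. split; [apply le_sqrt_of_sqr_le|apply sqrt_le_of_le_sqr]; lra. Qed.

Lemma sqrt_3_2_bounds : 12247 / 10000 <= sqrt (3 / 2) <= 12248 / 10000.
Proof. split; [apply le_sqrt_of_sqr_le|apply sqrt_le_of_le_sqr]; lra. Qed.

Lemma delta_0_neg be : 1 <= be <= sqrt (3 / 2) -> delta 0 be < 0.
Proof.
  intros Hbe. pose proof sqrt_2_bounds. pose proof Gmax_1_sqrt_3_2_le.
  pose proof (Gmax_mono 1 be (sqrt (3 / 2)) Hbe).
  rewrite delta_Gmax, Gmax_0 by lra. lra.
Qed.

Lemma delta_0_sqrt_2_pos : 0 < delta 0 (sqrt 2).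
Proof.
  pose proof sqrt_2_bounds. pose proof Gmax_1_sqrt_2_ge.
  rewrite delta_Gmax, Gmax_0 by lra. lra.
Qed.

Lemma delta_1_1_neg : delta 1 1 < 0.
Proof.
  pose proof Gmax_2_1_le. pose proof Gmax_1_1_ge.
  rewrite delta_Gmax by lra. lra.
Qed.

Lemma delta_1_pos be : sqrt (3 / 2) <= be <= sqrt 2 -> 0 < delta 1 be.
Proof.
  intros Hbe. pose proof sqrt_2_bounds. pose proof sqrt_3_2_bounds.
  rewrite delta_Gmax by lra.
  destruct (Rle_dec be (13 / 10)); [|destruct (Rle_dec be (14 / 10))].
  - pose proof Gmax_2_sqrt_3_2_ge. pose proof Gmax_1_13_le.
    pose proof (Gmax_mono 2 (sqrt (3 / 2)) be ltac:(lra)).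
    pose proof (Gmax_mono 1 be (13 / 10) ltac:(lra)). lra.
  - pose proof Gmax_2_13_ge. pose proof Gmax_1_14_le.
    pose proof (Gmax_mono 2 (13 / 10) be ltac:(lra)).
    pose proof (Gmax_mono 1 be (14 / 10) ltac:(lra)). lra.
  - pose proof Gmax_2_14_ge. pose proof Gmax_1_sqrt_2_le.
    pose proof (Gmax_mono 2 (14 / 10) be ltac:(lra)).
    pose proof (Gmax_mono 1 be (sqrt 2) ltac:(lra)). lra.
Qed.

Theorem lemma3p14 : beta_c 1 < sqrt (3 / 2) < beta_c 0.
Proof.
  pose proof sqrt_2_bounds. pose proof sqrt_3_2_bounds.
  destruct (beta_c_spec 1 1 (sqrt (3 / 2))) as [Hb1 D1]; try lra.
  { exact delta_1_1_neg. }
  { apply delta_1_pos; lra. }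
  destruct (beta_c_spec 0 (sqrt (3 / 2)) (sqrt 2)) as [Hb0 D0]; try lra.
  { apply delta_0_neg; lra. }
  { exact delta_0_sqrt_2_pos. }
  split; apply Rnot_le_lt; intros Hb.
  - pose proof (delta_1_pos (beta_c 1) ltac:(lra)). lra.
  - pose proof (delta_0_neg (beta_c 0) ltac:(lra)). lra.
Qed.
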